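(* For every $n\ge0$, the normalized median Genocchi number satisfies $$h_n=\sum_{\mathbf f\in M_n}\prod_{k=0}^{n-1}w(f_k,f_{k+1}),$$ where $w(k,k)=\gamma_k$, $w(k,k+1)=\alpha_k$, $w(k,k-1)=\beta_{k-1}$ with $\alpha_m=\beta_m=\frac{(m+1)(m+2)}{2}$ and $\gamma_m=(m+1)^2$. Moreover, as formal power series, $$\sum_{n\ge0}h_ns^n=\cfrac{1}{1-\cfrac{s}{1-\cfrac{s}{1-\cfrac{3s}{1-\cfrac{3s}{1-\cfrac{6s}{1-\cfrac{6s}{1-\cfrac{10s}{1-\cdots}}}}}}}},$$ where the partial numerators are $d_{2m-1}s=d_{2m}s=\binom{m+1}{2}s$ for $m\ge1$.
   Context: $M_n$ denotes the set of Motzkin paths of length $n$: sequences $\mathbf f=(f_0,\dots,f_n)$ of nonnegative integers with $f_0=f_n=0$ and $|f_{k+1}-f_k|\le1$. The normalized median Genocchi numbers are $h_n=H_{2n+1}/2^n$ ($h_0,h_1,h_2,\dots=1,1,2,7,38,295,\dots$), where the median Genocchi numbers $H_{2n-1}=g_{1,2n}$ come from the Seidel triangle: numbers $g_{k,m}$, $m\ge1$, $1\le k\le (m+1)/2$, with $g_{1,1}=1$, $g_{k,2m}=\sum_{i\ge k}g_{i,2m-1}$, $g_{k,2m+1}=\sum_{i\le k}g_{i,2m}$. It is known that $h_n=h_n(1)$, where $h_n(q)$ is the Poincaré polynomial (in $q=t^2$) of the degenerate flag variety $\mathrm{Fl}^a_n$ (tuples $(V_1,\dots,V_{n-1})$ of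 subspaces of $\mathbb C^n$ with basis $w_1,\dots,w_n$, $\dim V_k=k$, $pr_{k+1}V_k\subset V_{k+1}$, $pr_k$ killing the $w_k$-coordinate), and that $h_n(q)=\sum_{f_1,\dots,f_{n-1}\ge 0} q^{\sum_{k=1}^{n-1}(k-f_k)(1-f_k+f_{k+1})}\prod_{k=1}^{n-1}\binom{1+f_{k-1}}{f_k}_{q}\binom{1+f_{k+1}}{f_k}_{q}$ with $f_0=f_n=0$, Gaussian binomials $\binom{m}{k}_q$ (zero unless $0\le k\le m$). *)

From HB Require Import structures.
From mathcomp Require Import all_boot all_order all_algebra.
Set Implicit Arguments. Unset Strict Implicit. Unset Printing Implicit Defensive.
Import Order.TTheory GRing.Theory Num.Theory.

(* seidel_row m = [:: g_{1,m}; ...; g_{floor((m+1)/2),m}] for m >= 1;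
   seidel_row 0 = [::] (unused).  Entries g_{k,m} with k outside the
   range are zero (nth default). *)
Fixpoint seidel_row (m : nat) : seq nat :=
  match m with
  | 0 => [::]
  | 1 => [:: 1]
  | m'.+1 =>
      let r := seidel_row m' in
      if odd m
      then
        mkseq (fun k => sumn (take k.+1 r)) (m.+1)./2
      else
        mkseq (fun k => sumn (drop k r)) (m.+1)./2
  end.

(* g k m = g_{k,m} (1-based k) *)
Definition seidel (k m : nat) : nat := nth 0 (seidel_row m) k.-1.

Definition medGenocchi (j : nat) : nat := seidel 1 j.+1.

Local Open Scope ring_scope.

Definition hgen (n : nat) : rat := (medGenocchi (2 * n).+1)%:R / 2%:R ^+ n.

(* A path of length n is encoded by f : {ffun 'I_n.+1 -> 'I_n.+1},
   f_k = f (inord k).  (Any Motzkin path of length n has heights <= n,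
   so the bounded codomain loses nothing.) *)
Definition pval (n : nat) (f : {ffun 'I_n.+1 -> 'I_n.+1}) (k : nat) : nat :=
  nat_of_ord (f (inord k)).

Definition motzkin (n : nat) (f : {ffun 'I_n.+1 -> 'I_n.+1}) : bool :=
  [&& pval f 0 == 0%N, pval f n == 0%N &
      [forall k : 'I_n, (pval f k.+1 <= (pval f k).+1)%N
                        && (pval f k <= (pval f k.+1).+1)%N]].

Definition alpha (m : nat) : rat := (m.+1 * m.+2)%:R / 2%:R.
Definition beta  (m : nat) : rat := (m.+1 * m.+2)%:R / 2%:R.
Definition gamma (m : nat) : rat := (m.+1 ^ 2)%:R.

Definition w (a b : nat) : rat :=
  if b == a then gamma a
  else if b == a.+1 then alpha a
  else if a == b.+1 then beta b
  else 0.

Definition motzkin_sum (n : nat) : rat :=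
  \sum_(f : {ffun 'I_n.+1 -> 'I_n.+1} | motzkin f)
     \prod_(0 <= k < n) w (pval f k) (pval f k.+1).

Definition series := nat -> rat.

Definition ps_one : series := fun n => (n == 0%N)%:R.

(* coefficients 0..n of the multiplicative inverse of f (assuming f 0 = 1):
   g_0 = 1, g_{n+1} = - sum_{i=1}^{n+1} f_i g_{n+1-i} *)
Fixpoint ps_inv_coefs (f : series) (n : nat) : seq rat :=
  match n with
  | 0 => [:: 1]
  | n'.+1 =>
      let s := ps_inv_coefs f n' in
      rcons s (- \sum_(0 <= i < n'.+1) f i.+1 * nth 0 s (n' - i))
  end.

Definition ps_inv (f : series) : series := fun n => nth 0 (ps_inv_coefs f n) n.

(* coefficient d_j of the continued fraction, j >= 1:
   d_{2m-1} = d_{2m} = binom(m+1,2) *)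
Definition cf_d (j : nat) : rat := ('C(((j.+1)./2).+1, 2))%:R.

(* cf_trunc r j = 1/(1 - d_{j+1} s/(1 - d_{j+2} s/(... /(1 - d_{j+r} s * 1)))) ,
   i.e. the tail of the continued fraction starting at d_{j+1},
   truncated after r levels. *)
Fixpoint cf_trunc (r j : nat) : series :=
  match r with
  | 0 => ps_one
  | r'.+1 =>
      let T := cf_trunc r' j.+1 in
      ps_inv (fun n => ps_one n - cf_d j.+1 * (if n is n'.+1 then T n' else 0))
  end.

From HB Require Import structures.
From mathcomp Require Import all_boot all_order all_algebra.
From mathcomp Require Import ring zify.
Import Order.TTheory GRing.Theory Num.Theory.
Set Implicit Arguments. Unset Strict Implicit. Unset Printing Implicit Defensive.
Local Open Scope ring_scope.

(* Write P n j for the total weight of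
   the Motzkin prefixes of length n from height 0 to height j; both claims
   reduce to h_n = P n 0.
   1. Seidel triangle.  For functions on Q put
        V f x = (x+1)^2 f(x+1) - x(x+1) f(x) = W f x + D f x.
      Every entry of the Seidel triangle is the value at 1 of a word in
      V, W, D applied to the constant 1; in particular H_{2n+1} = V^n 1 (1).
   2. Binomial basis.  In the basis B_j(x) = binom(x-1,j)/(j+1), V acts by
      twice the tridiagonal matrix (alpha, gamma, beta), the transpose of the
      transfer matrix of Motzkin paths; since B_j(1) = [j = 0] we get
      V^n 1 (1) = 2^n P n 0, i.e. h_n = P n 0.
   3. Transfer matrix.  The sum over all height sequences defining
      motzkin_sum obeys the recursion of P, so motzkin_sum n = P n 0.
   4. Continued fraction.  By last-return decomposition the coefficient of
      s^n of the truncated S-fraction weighs the Dyck paths of length 2n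
      (down-steps to height h weighted d_{h+1}); contracting pairs of steps
      gives Motzkin paths weighted by alpha, gamma, beta, since
      d_{2a+1} d_{2a+2} = alpha_a beta_a and d_{2a} + d_{2a+1} = gamma_a. *)

Definition Vop (f : rat -> rat) : rat -> rat :=
  fun x => (x + 1) ^+ 2 * f (x + 1) - x * (x + 1) * f x.
Definition Wop (f : rat -> rat) : rat -> rat :=
  fun x => x * ((x + 1) * f (x + 1) - x * f x).
Definition Dop (f : rat -> rat) : rat -> rat :=
  fun x => (x + 1) * f (x + 1) - x * f x.

Definition one_fun : rat -> rat := fun _ => 1.

Lemma VWD f x : Vop f x = Wop f x + Dop f x.
Proof. by rewrite /Vop /Wop /Dop; ring. Qed.

Lemma DW_VD f x : Dop (Wop f) x = Vop (Dop f) x + Wop f x.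
Proof. by rewrite /Vop /Wop /Dop; ring. Qed.

Lemma Dop_one x : Dop one_fun x = 1.
Proof. by rewrite /Dop /one_fun; ring. Qed.

Lemma Wop_at1 f : Wop f 1 = Dop f 1.
Proof. by rewrite /Wop /Dop; ring. Qed.

Lemma iterV_ext n f g : f =1 g -> iter n Vop f =1 iter n Vop g.
Proof.
move=> fg; elim: n => [|n IH] x //=.
by rewrite /Vop !IH.
Qed.

Lemma iterV_add n f g h : (forall y, f y = g y + h y) ->
  forall x, iter n Vop f x = iter n Vop g x + iter n Vop h x.
Proof.
move=> fgh; elim: n => [|n IH] x /=; first exact: fgh.
by rewrite /Vop !IH; ring.
Qed.

(* Closed forms for the entries of rows 2n+2 and 2n+1 of the Seidel
   triangle: even_entry (n+1) (k+1) = g_{k+1,2n+2} and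
   odd_entry n (k+1) = g_{k+1,2n+1} (proved below). *)
Definition even_entry (n k : nat) : rat := iter (n - k) Vop (iter k.-1 Wop one_fun) 1.
Definition odd_entry (n k : nat) : rat :=
  if (k <= n)%N then iter (n - k) Vop (Dop (iter k.-1 Wop one_fun)) 1
  else iter n Wop one_fun 1.

Lemma odd_entry1 n : (0 < n)%N -> odd_entry n 1 = even_entry n 1.
Proof.
move=> n_gt0; rewrite /odd_entry /even_entry n_gt0 /=.
by apply: iterV_ext => y; rewrite Dop_one.
Qed.

Lemma odd_entryS n k : (k.+2 <= n)%N ->
  odd_entry n k.+2 = odd_entry n k.+1 + even_entry n k.+2.
Proof.
move=> hk; rewrite /odd_entry /even_entry hk (ltnW hk) /=.
have -> : (n - k.+1 = (n - k.+2).+1)%N by lia.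
by rewrite iterSr; apply: iterV_add => y; rewrite DW_VD.
Qed.

Lemma odd_entry_last n : (0 < n)%N -> odd_entry n n.+1 = odd_entry n n.
Proof.
case: n => // n _; rewrite /odd_entry ltnn leqnn subnn /=.
by rewrite Wop_at1.
Qed.

Lemma even_entry_last n : even_entry n.+1 n.+1 = odd_entry n n.+1.
Proof. by rewrite /even_entry /odd_entry subnn ltnn. Qed.

Lemma even_entryS n k : (1 <= k <= n)%N ->
  even_entry n.+1 k = odd_entry n k + even_entry n.+1 k.+1.
Proof.
case/andP; case: k => // k _ hk; rewrite /even_entry /odd_entry hk.
have -> : (n.+1 - k.+1 = (n - k.+1).+1)%N by lia.
have -> : (n.+1 - k.+2 = n - k.+1)%N by lia.
by rewrite iterSr; apply: iterV_add => y; rewrite VWD addrC.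
Qed.

Definition odd_row_spec n := size (seidel_row n.*2.+1) = n.+1 /\
  forall k, (k < n.+1)%N -> (nth 0%N (seidel_row n.*2.+1) k)%:R = odd_entry n k.+1.
Definition even_row_spec n := size (seidel_row n.*2.+2) = n.+1 /\
  forall k, (k < n.+1)%N -> (nth 0%N (seidel_row n.*2.+2) k)%:R = even_entry n.+1 k.+1.

Lemma seidel_rowSS m : seidel_row m.+2 =
  if odd m.+2 then mkseq (fun k => sumn (take k.+1 (seidel_row m.+1))) (m.+3)./2
  else mkseq (fun k => sumn (drop k (seidel_row m.+1))) (m.+3)./2.
Proof. by []. Qed.

Lemma natr_sumn_take (s : seq nat) k :
  (sumn (take k s))%:R = \sum_(i < k) (nth 0%N s i)%:R :> rat.
Proof.
elim: s k => [|x s IH] [|k] /=; rewrite ?big_ord0 //.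
  by rewrite big1 // => i _; rewrite nth_nil.
by rewrite big_ord_recl natrD IH.
Qed.

Lemma even_row_from_odd n : odd_row_spec n -> even_row_spec n.
Proof.
case=> hsize hentry; rewrite /even_row_spec seidel_rowSS.
have -> : odd n.*2.+2 = false by rewrite /= odd_double.
have -> : (n.*2.+3)./2 = n.+1.
  by rewrite -[n.*2.+3]/(true + (n.+1).*2)%N half_bit_double.
rewrite size_mkseq; split => // k hk; rewrite nth_mkseq //.
set r := seidel_row n.*2.+1 in hsize hentry *.
suff suffix_sum d k' : (k' + d = n)%N -> (sumn (drop k' r))%:R = even_entry n.+1 k'.+1.
  by apply: (suffix_sum (n - k)%N); lia.
elim: d k' => [|d IH] k' hkd.
  rewrite addn0 in hkd; subst k'.
  rewrite (drop_nth 0%N) ?hsize // drop_oversize ?hsize //= addn0 hentry //.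
  by rewrite even_entry_last.
rewrite (drop_nth 0%N) ?hsize /=; last by lia.
rewrite natrD hentry; last by lia.
by rewrite IH; [rewrite [RHS]even_entryS //; apply/andP; split|]; lia.
Qed.

Lemma odd_row_from_even n : even_row_spec n -> odd_row_spec n.+1.
Proof.
case=> hsize hentry; rewrite /odd_row_spec doubleS seidel_rowSS.
have -> : odd (n.*2.+1).+2 by rewrite /= odd_double.
have -> : ((n.*2.+1).+3)./2 = n.+2.
  by rewrite -[(n.*2.+1).+3]/(false + (n.+2).*2)%N half_bit_double.
rewrite size_mkseq; split => // k hk; rewrite nth_mkseq // natr_sumn_take.
elim: k hk => [|k IH] hk; first by rewrite big_ord1 hentry // odd_entry1.
rewrite big_ord_recr /= IH; last by lia.
have [hk1|hk1] := ltnP k.+1 n.+1; first by rewrite hentry // odd_entryS.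
rewrite nth_default ?hsize // addr0.
have -> : k = n by lia.
by rewrite odd_entry_last.
Qed.

Lemma seidel_rows n : odd_row_spec n /\ even_row_spec n.
Proof.
have odd0 : odd_row_spec 0 by split => // k; rewrite ltnS leqn0 => /eqP ->.
elim: n => [|n [_ /odd_row_from_even IH]]; first by split => //; exact: even_row_from_odd.
by split => //; exact: even_row_from_odd.
Qed.

Lemma hgen_iterV n : hgen n = iter n Vop one_fun 1 / 2%:R ^+ n.
Proof.
have [_ [_ hentry]] := seidel_rows n.
by rewrite /hgen /medGenocchi /seidel mul2n hentry // /even_entry subn1.
Qed.

(* P n j: total weight of the Motzkin prefixes of length n from height 0
   to height j (up-steps into j weigh alpha_{j-1}, level steps at j weigh
   gamma_j, down-steps into j weigh beta_j). *)
Fixpoint motz (n j : nat) : rat :=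
  match n with
  | 0 => (j == 0)%:R
  | n'.+1 => (if j is j'.+1 then alpha j' * motz n' j' else 0)
             + gamma j * motz n' j + beta j * motz n' j.+1
  end.

Lemma motz_high n j : (n < j)%N -> motz n j = 0.
Proof.
elim: n j => [|n IH] [|j] //= hj.
by rewrite !IH ?mulr0 ?addr0 //; lia.
Qed.

(* Moving a tridiagonal matrix (a, g, b) from the basis vectors e to the
   coefficients c: the finite-support reindexing behind step 2. *)
Lemma tridiag_transpose (a g b c e : nat -> rat) n :
  (forall j, (n < j)%N -> c j = 0) ->
  \sum_(j < n.+1) c j * (a j * e j.+1 + g j * e j
                         + (if (j : nat) is j'.+1 then b j' * e j' else 0))
  = \sum_(j < n.+2) ((if (j : nat) is j'.+1 then a j' * c j' else 0)
                     + g j * c j + b j * c j.+1) * e j.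
Proof.
move=> c_high.
have c1 : c n.+1 = 0 by apply: c_high.
have c2 : c n.+2 = 0 by apply: c_high; lia.
under eq_bigr do rewrite !mulrDr.
under [RHS]eq_bigr do rewrite !mulrDl.
rewrite !big_split /=; congr (_ + _ + _).
- rewrite [RHS]big_ord_recl /= mul0r add0r.
  by apply: eq_bigr => j _; rewrite /bump /=; ring.
- rewrite [RHS]big_ord_recr /= c1 mulr0 mul0r addr0.
  by apply: eq_bigr => j _; ring.
- rewrite [LHS]big_ord_recl /= mulr0 add0r (big_ord_recr n.+1) (big_ord_recr n) /=.
  rewrite c1 c2 !mulr0 !mul0r !addr0.
  by apply: eq_bigr => j _; rewrite /bump /=; ring.
Qed.

(* The binomial basis B_j(x) = binom(x-1, j)/(j+1). *)
Definition binb (j : nat) (x : rat) : rat :=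
  (\prod_(i < j) (x - i.+1%:R)) / (j.+1)`!%:R.

Lemma binb_at1 j : binb j 1 = (j == 0)%:R.
Proof.
rewrite /binb; case: j => [|j]; first by rewrite big_ord0 divr1.
by rewrite big_ord_recl subrr !mul0r.
Qed.

Lemma prod_shift1 x j :
  \prod_(i < j.+1) (x + 1 - i.+1%:R) = x * \prod_(i < j) (x - i.+1%:R) :> rat.
Proof.
rewrite big_ord_recl /=; congr (_ * _); first ring.
by apply: eq_bigr => i _; rewrite /bump /=; ring.
Qed.

Lemma Vop_binb j x : Vop (binb j) x =
  2 * (alpha j * binb j.+1 x + gamma j * binb j x
       + (if j is j'.+1 then beta j' * binb j' x else 0)).
Proof.
case: j => [|j].
  by rewrite /Vop /binb /alpha /gamma !big_ord0 big_ord1 !factS fact0 /=; field.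
rewrite /Vop /binb prod_shift1 !big_ord_recr /= /alpha /gamma /beta !factS.
set q := \prod_(i < j) _.
have fact_neq0 : (j`!%:R : rat) != 0 by rewrite pnatr_eq0 -lt0n fact_gt0.
field.
by rewrite fact_neq0 nat1r -!natrD !pnatr_eq0 !addn_eq0.
Qed.

Lemma Vop_sum K (c : nat -> rat) (F : nat -> rat -> rat) x :
  Vop (fun y => \sum_(j < K) c j * F j y) x = \sum_(j < K) c j * Vop (F j) x.
Proof. by rewrite /Vop !mulr_sumr -sumrB; apply: eq_bigr => j _; ring. Qed.

Lemma iterV_binb n x :
  iter n Vop one_fun x = 2%:R ^+ n * \sum_(j < n.+1) motz n j * binb j x.
Proof.
elim: n x => [|n IH] x; first by rewrite big_ord1 /binb big_ord0 /= /one_fun.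
have expand y : iter n Vop one_fun y =
    \sum_(j < n.+1) (2%:R ^+ n * motz n j) * binb j y.
  by rewrite IH mulr_sumr; apply: eq_bigr => j _; ring.
have -> : iter n.+1 Vop one_fun x =
    Vop (fun y => \sum_(j < n.+1) (2%:R ^+ n * motz n j) * binb j y) x.
  by rewrite iterS /Vop !expand.
rewrite (Vop_sum _ (fun j => 2%:R ^+ n * motz n j) binb).
under eq_bigr do rewrite Vop_binb -mulrA [motz n _ * _]mulrCA.
rewrite -mulr_sumr -mulr_sumr mulrA -exprSr.
have := @tridiag_transpose alpha gamma beta (motz n) (binb^~ x) n (@motz_high n).
by rewrite /= => ->.
Qed.

Lemma hgen_motz n : hgen n = motz n 0.
Proof.
rewrite hgen_iterV iterV_binb big_ord_recl binb_at1 mulr1.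
rewrite big1 ?addr0; last by move=> i _; rewrite binb_at1 mulr0.
by field; rewrite expf_neq0.
Qed.

(* dyck j t h: total weight of the paths of length t from height 0 to
   height h with unit up-steps, where a down-step to height h' weighs
   d_{j+h'+1}.  Then dyck j (2n) 0 is the coefficient of s^n of the
   S-fraction with numerators d_{j+1}, d_{j+2}, ... (cf_trunc_dyck). *)
Fixpoint dyck (j t h : nat) : rat :=
  match t with
  | 0 => (h == 0)%:R
  | t'.+1 => (if h is h'.+1 then dyck j t' h' else 0) + cf_d (j + h).+1 * dyck j t' h.+1
  end.

Lemma dyckS j t h : dyck j t.+1 h =
  (if h is h'.+1 then dyck j t h' else 0) + cf_d (j + h).+1 * dyck j t h.+1.
Proof. by []. Qed.

Lemma dyck_parity j t h : odd (t + h) -> dyck j t h = 0.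
Proof.
elim: t h => [|t IH] h /=; first by case: h.
move=> hp; rewrite IH ?mulr0 ?addr0; last by rewrite addnS -addSn.
case: h hp => // h hp; apply: IH.
by move: hp; rewrite addnS /= negbK.
Qed.

(* Last-return decomposition: a path ending at height k+1 splits at its
   last visit to height 0 into a path returning to 0 and a path staying
   above level 0, i.e. a shifted path. *)
Lemma dyck_last_return j t k :
  dyck j t.+1 k.+1 = \sum_(a < t.+1) dyck j a 0 * dyck j.+1 (t - a) k.
Proof.
elim: t k => [|t IH] k; first by rewrite big_ord1 /= mulr0 addr0 mul1r.
rewrite [LHS]dyckS big_ord_recr subnn [dyck j.+1 0 k]/=.
have shift a : (a < t.+1)%N -> (t.+1 - a = (t - a).+1)%N by move=> ha; rewrite subSn.
case: k => [|k].
  rewrite (IH 1%N) mulr1 addrC mulr_sumr; congr (_ + _).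
  by apply: eq_bigr => a _; rewrite (shift _ (ltn_ord a)) dyckS !addn0 addn1 /=; ring.
rewrite IH IH mulr0 Monoid.mulm1 mulr_sumr -big_split /=.
by apply: eq_bigr => a _; rewrite (shift _ (ltn_ord a)) dyckS !addnS !addSn /=; ring.
Qed.

Lemma sum_even_odd (F : nat -> rat) n :
  \sum_(a < n.*2.+1) F a = \sum_(a < n.+1) F a.*2 + \sum_(a < n) F a.*2.+1.
Proof.
elim: n => [|n IH]; first by rewrite !big_ord1 big_ord0 addr0.
rewrite doubleS (big_ord_recr n.*2.+2) (big_ord_recr n.*2.+1) /= IH.
by rewrite (big_ord_recr n.+1) [X in _ = _ + X]big_ord_recr /= doubleS; ring.
Qed.

(* Returns to height 0: removing the last down-step and splitting at the
   last return leaves two paths of even length (odd ones weigh 0). *)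
Lemma dyck_convolution j n :
  dyck j n.+1.*2 0 = cf_d j.+1 * \sum_(a < n.+1) dyck j a.*2 0 * dyck j.+1 (n - a).*2 0.
Proof.
rewrite doubleS dyckS add0r addn0 dyck_last_return.
rewrite (sum_even_odd (fun a => dyck j a 0 * dyck j.+1 (n.*2 - a) 0)).
rewrite [X in _ + X]big1 ?addr0; last first.
  by move=> a _; rewrite dyck_parity ?mul0r // addn0 /= odd_double.
by congr (_ * _); apply: eq_bigr => a _; rewrite doubleB.
Qed.

Lemma ps_invS f n :
  ps_inv f n.+1 = - \sum_(0 <= i < n.+1) f i.+1 * ps_inv f (n - i)%N.
Proof.
have size_coefs m : size (ps_inv_coefs f m) = m.+1.
  by elim: m => //= m IH; rewrite size_rcons IH.
have coefs_nth m i : (i <= m)%N -> nth 0 (ps_inv_coefs f m) i = ps_inv f i.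
  elim: m i => [|m IH] i; first by rewrite leqn0 => /eqP ->.
  rewrite leq_eqVlt => /predU1P [-> //|hi].
  by rewrite /= nth_rcons size_coefs hi IH.
rewrite {1}/ps_inv /= nth_rcons size_coefs ltnn eqxx.
by congr (- _); apply: eq_big_nat => i hi; rewrite coefs_nth // leq_subr.
Qed.

Lemma cf_trunc_dyck r j n : (n <= r)%N -> cf_trunc r j n = dyck j n.*2 0.
Proof.
elim: r j n => [|r IHr] j n hn; first by move: hn; rewrite leqn0 => /eqP ->.
rewrite /=; set F := fun n0 => _.
suff coef m : (m <= r.+1)%N -> ps_inv F m = dyck j m.*2 0 by exact: coef.
elim/ltn_ind: m => -[|m] IHm hm //.
rewrite ps_invS dyck_convolution big_mkord -sumrN mulr_sumr.
rewrite [RHS](reindex_inj rev_ord_inj) /=; apply: eq_bigr => i _.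
have hi := ltn_ord i.
rewrite /F /ps_one /= sub0r mulNr opprK IHr; last by lia.
rewrite IHm; [|lia|lia].
have -> : (m - (m - i) = i)%N by lia.
have -> : (m.+1 - i.+1 = m - i)%N by lia.
ring.
Qed.

Lemma alpha_binomial a : ('C(a.+2, 2))%:R = alpha a.
Proof.
have bin2_double m : ('C(m.+2, 2) * 2 = m.+1 * m.+2)%N.
  by elim: m => [|m IH] //; rewrite binS bin1 mulnDl IH; lia.
by rewrite /alpha -bin2_double natrM mulfK.
Qed.

Lemma cf_d_odd a : cf_d a.*2.+1 = alpha a.
Proof. by rewrite /cf_d -alpha_binomial -doubleS doubleK. Qed.

Lemma cf_d_even a : cf_d a.*2.+2 = alpha a.
Proof.
by rewrite /cf_d -alpha_binomial -[a.*2.+3]/(true + (a.+1).*2)%N half_bit_double.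
Qed.

Lemma gamma0 : gamma 0 = alpha 0.
Proof. by rewrite /gamma /alpha; field. Qed.

Lemma gammaS a : gamma a.+1 = alpha a + alpha a.+1.
Proof. by rewrite /gamma /alpha; field. Qed.

Lemma beta_alpha a : beta a = alpha a.
Proof. by []. Qed.

(* Two steps of a Dyck path between even heights, in Motzkin form. *)
Lemma dyck_two_steps t a : dyck 0 t.+2 a.*2 =
  (if a is a'.+1 then dyck 0 t a'.*2 else 0) + gamma a * dyck 0 t a.*2
  + alpha a ^+ 2 * dyck 0 t a.+1.*2.
Proof.
case: a => [|a].
  rewrite !dyckS /= -[1%N]/(0.*2.+1)%N cf_d_odd -[2%N]/(0.*2.+2)%N cf_d_even gamma0.
  by ring.
have d3 : cf_d a.*2.+3 = alpha a.+1 by rewrite -cf_d_odd doubleS.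
have d4 : cf_d a.*2.+4 = alpha a.+1 by rewrite -cf_d_even doubleS.
rewrite !doubleS !dyckS !add0n d3 d4 cf_d_even gammaS.
by ring.
Qed.

Lemma motz_contraction n a : motz n a = (\prod_(i < a) alpha i) * dyck 0 n.*2 a.*2.
Proof.
elim: n a => [|n IH] a.
  by case: a => [|a] /=; rewrite ?big_ord0 ?mul1r ?mulr0.
rewrite doubleS dyck_two_steps.
case: a => [|a] /=; rewrite beta_alpha !IH; first by rewrite big_ord0 big_ord1; ring.
by rewrite (big_ord_recr a.+1) (big_ord_recr a) /=; ring.
Qed.

Lemma sum_indicator N h (F : nat -> rat) : (h < N)%N ->
  \sum_(i < N) ((i : nat) == h)%:R * F i = F h.
Proof.
move=> hN; rewrite (bigD1 (Ordinal hN)) //= eqxx mul1r big1 ?addr0 // => i hi.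
suff /negbTE -> : (i : nat) != h by rewrite mul0r.
by apply: contra hi => /eqP eq_ih; apply/eqP/val_inj.
Qed.

Lemma w_indicators i j : w i j =
  (i == j)%:R * gamma j + (j == i.+1)%:R * alpha i + (i == j.+1)%:R * beta j.
Proof.
rewrite /w; have [->|ji] := eqVneq j i.
  by rewrite (_ : (i == i.+1) = false) /=; [ring | lia].
have [->|jSi] := eqVneq j i.+1.
  by rewrite (_ : (i == i.+2) = false) /=; [ring | lia].
by have [->|iSj] := eqVneq i j.+1; rewrite /=; ring.
Qed.

Lemma w_non_step a b : ~~ ((b <= a.+1) && (a <= b.+1))%N -> w a b = 0.
Proof.
move=> not_step; rewrite w_indicators.
have [h1 h2 h3] : [/\ (a == b) = false, (b == a.+1) = false & (a == b.+1) = false].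
  by split; apply/eqP => e; move: not_step; rewrite e; lia.
by rewrite h1 h2 h3 !mul0r !addr0.
Qed.

Lemma motz_transfer K m j : (m.+1 < K)%N -> (j < K)%N ->
  motz m.+1 j = \sum_(i < K) motz m i * w i j.
Proof.
move=> hm hj.
transitivity (\sum_(i < K) ((i : nat) == j)%:R * (gamma j * motz m i)
  + \sum_(i < K) (j == i.+1)%:R * (alpha i * motz m i)
  + \sum_(i < K) ((i : nat) == j.+1)%:R * (beta j * motz m i)); last first.
  by rewrite -!big_split; apply: eq_bigr => i _; rewrite w_indicators /=; ring.
have up_steps : \sum_(i < K) (j == i.+1)%:R * (alpha i * motz m i) =
    (if j is j'.+1 then alpha j' * motz m j' else 0).
  case: j hj => [|j] hj; first by rewrite big1 // => i _; rewrite mul0r.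
  under eq_bigr do rewrite eqSS eq_sym.
  by rewrite (sum_indicator (fun i => alpha i * motz m i)) //; lia.
have down_steps : \sum_(i < K) ((i : nat) == j.+1)%:R * (beta j * motz m i) =
    beta j * motz m j.+1.
  have [hj1|hj1] := ltnP j.+1 K; first by rewrite (sum_indicator (fun i => beta j * motz m i)).
  rewrite (@motz_high m j.+1) ?mulr0; last by lia.
  rewrite big1 // => i _; suff /negbTE -> : (i : nat) != j.+1 by rewrite mul0r.
  by apply/eqP => e; move: (ltn_ord i); rewrite e; lia.
rewrite (sum_indicator (fun i => gamma j * motz m i)) // up_steps down_steps /=.
by rewrite (addrC (gamma j * _)).
Qed.

(* Total weight of the height sequences (f_0, ..., f_m) with heights below N,
   starting at 0 and ending at j; non-Motzkin sequences weigh 0. *)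
Definition hval N m (f : {ffun 'I_m.+1 -> 'I_N}) (k : nat) : nat := f (inord k).

Definition path_weight N m (j : nat) : rat :=
  \sum_(f : {ffun 'I_m.+1 -> 'I_N})
     ((hval f 0 == 0%N)%:R * (hval f m == j)%:R)
     * \prod_(0 <= k < m) w (hval f k) (hval f k.+1).

Lemma path_weight0 N j : (0 < N)%N -> path_weight N 0 j = (j == 0%N)%:R.
Proof.
move=> N_gt0; rewrite /path_weight.
rewrite (reindex (fun t : 'I_N => [ffun _ : 'I_1 => t])) /=; last first.
  exists (fun f => f ord0) => [t _ | f _]; first by rewrite ffunE.
  by apply/ffunP => i; rewrite ffunE (ord1 i).
under eq_bigr do rewrite /hval !ffunE big_geq // mulr1.
by rewrite (sum_indicator (fun t => (t == j)%:R)) // eq_sym.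
Qed.

Definition extend_path N m (g : {ffun 'I_m.+1 -> 'I_N}) (t : 'I_N) :
    {ffun 'I_m.+2 -> 'I_N} :=
  [ffun i : 'I_m.+2 => if ((i : nat) < m.+1)%N then g (inord i) else t].

Lemma hval_extend N m g t k : (k <= m)%N -> hval (@extend_path N m g t) k = hval g k.
Proof. by move=> hk; rewrite /hval ffunE inordK ?ltnS ?hk //; lia. Qed.

Lemma hval_extend_last N m g t : hval (@extend_path N m g t) m.+1 = t.
Proof. by rewrite /hval ffunE inordK // ltnn. Qed.

Lemma sum_extend N m (F : {ffun 'I_m.+2 -> 'I_N} -> rat) :
  \sum_(f : {ffun 'I_m.+2 -> 'I_N}) F f =
  \sum_(g : {ffun 'I_m.+1 -> 'I_N}) \sum_(t : 'I_N) F (extend_path g t).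
Proof.
rewrite pair_bigA (reindex (fun p => extend_path p.1 p.2)) //=.
exists (fun f => ([ffun i : 'I_m.+1 => f (inord i)], f ord_max)) => [[g t] _ | f _] /=.
  congr (_, _); last by rewrite ffunE /= ltnn.
  apply/ffunP => i; rewrite !ffunE inordK; last by move: (ltn_ord i); lia.
  by rewrite ltn_ord inord_val.
apply/ffunP => i; rewrite !ffunE; case: ifP => hi; first by rewrite inordK // inord_val.
by congr (f _); apply/val_inj => /=; move: (ltn_ord i) hi; lia.
Qed.

Lemma path_weight_step N m j : (j < N)%N ->
  path_weight N m.+1 j = \sum_(i < N) path_weight N m i * w i j.
Proof.
move=> hj; rewrite /path_weight sum_extend.
under [RHS]eq_bigr do rewrite mulr_suml.
rewrite [RHS]exchange_big /=; apply: eq_bigr => g _.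
set c := (hval g 0 == 0%N)%:R.
set P := \prod_(0 <= k < m) w (hval g k) (hval g k.+1).
have prefix t : \prod_(0 <= k < m) w (hval (extend_path g t) k) (hval (extend_path g t) k.+1) = P.
  by apply: eq_big_nat => k hk; rewrite !hval_extend //; lia.
transitivity (\sum_(t < N) ((t : nat) == j)%:R * (c * (P * w (hval g m) t))).
  apply: eq_bigr => t _.
  rewrite big_nat_recr //= prefix hval_extend_last !hval_extend // -/c; ring.
transitivity (\sum_(i < N) ((i : nat) == hval g m)%:R * (c * (P * w i j))); last first.
  by apply: eq_bigr => i _; rewrite eq_sym; ring.
rewrite (sum_indicator (fun t => c * (P * w (hval g m) t))) //.
by rewrite (sum_indicator (fun i => c * (P * w i j))) //; exact: ltn_ord.
Qed.

Lemma path_weight_motz N m j : (m < N)%N -> (j < N)%N -> path_weight N m j = motz m j.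
Proof.
elim: m j => [|m IH] j hm hj; first by rewrite path_weight0 //; lia.
rewrite path_weight_step // (motz_transfer (K := N)) //.
by apply: eq_bigr => i _; rewrite IH //; lia.
Qed.

Lemma prod_nat_zero n (F : nat -> rat) k : (k < n)%N -> F k = 0 ->
  \prod_(0 <= i < n) F i = 0.
Proof.
move=> hk Fk0; rewrite (@big_cat_nat _ _ _ k 0 n) //=; last exact: ltnW.
by rewrite [X in _ * X]big_ltn // Fk0 mul0r mulr0.
Qed.

Lemma motzkin_sum_motz n : motzkin_sum n = motz n 0.
Proof.
rewrite -(@path_weight_motz n.+1) // /motzkin_sum /path_weight big_mkcond /=.
apply: eq_bigr => f _; rewrite /motzkin -/(hval f 0) -/(hval f n).
case: (hval f 0 == 0%N) => /=; last by rewrite !mul0r.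
case: (hval f n == 0%N) => /=; last by rewrite mulr0 mul0r.
case: ifP => steps; first by rewrite mul1r.
move/negbT/forallPn: steps => [k not_step].
by rewrite mulr1 (@prod_nat_zero n _ k) // w_non_step.
Qed.

Theorem corollary3p4 :
  (forall n : nat, hgen n = motzkin_sum n) /\
  (forall n N : nat, (n <= N)%N -> cf_trunc N 0 n = hgen n).
Proof.
split => [n | n N le_nN]; first by rewrite hgen_motz motzkin_sum_motz.
by rewrite cf_trunc_dyck // hgen_motz motz_contraction big_ord0 mul1r.
Qed.
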